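(* Let $n\ge 4$, $s_k=\sin(k\pi/n)$, and let $D_1,\dots,D_{n-1}$ be positive numbers satisfying $D_kD_{l-j}\ge D_jD_{l-k}+D_lD_{k-j}$ for all integers $1\le j<k<l\le n-1$, together with $D_1=D_{n-1}=s_1$. Let $a_k=\log(D_k/s_k)$. Then (1) $a_k\ge 0$ for all $k\in\{2,\dots,n-2\}$; (2) if $a_k>0$ for some $k\in\{2,\dots,n-2\}$, then $a_k>0$ for all $k\in\{2,\dots,n-2\}$. *)

From Stdlib Require Import Reals Lra Lia.
Open Scope R_scope.

Definition s (n k : nat) : R := sin (INR k * PI / INR n).

Definition a (n : nat) (D : nat -> R) (k : nat) : R := ln (D k / s n k).

From Stdlib Require Import Reals Lra Lia.
Open Scope R_scope.

(* Put r_k = D_k / s_k, so that a_k = ln r_k and r_1 = r_{n-1} = 1.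
   Only the instances j = 1, l = k + 1 of the hypothesis are used: with D_1 = s_1
   they read D_k^2 >= s_1^2 + D_{k+1} D_{k-1}, while the sines satisfy the exact
   identity s_k^2 = s_1^2 + s_{k+1} s_{k-1}.  Subtracting, with c = s_1^2 and
   p_k = s_{k+1} s_{k-1} > 0,
        c (r_k^2 - 1) >= (r_{k+1} r_{k-1} - r_k^2) p_k.
   This is a discrete minimum principle for r, developed abstractly in the section
   [MinimumPrinciple] for any positive weights w satisfying the sine recurrence:
   (1) at a minimiser of r the right-hand side is >= 0, so min r >= 1 (given
   r >= 1 at both ends); (2) wherever r_k = 1 the inequality forces
   r_{k+1} r_{k-1} <= 1, hence r_{k+1} = r_{k-1} = 1, and by induction r is
   identically 1.  The theorem follows: (1) gives a_k >= 0, and by (2) a single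
   vanishing a_k would force every a_k to vanish. *)

Lemma exists_argmin (f : nat -> R) (N : nat) : (1 <= N)%nat ->
  exists k, (1 <= k <= N)%nat /\ forall i, (1 <= i <= N)%nat -> f k <= f i.
Proof.
  induction N as [|N IH]; intros HN; [lia|].
  destruct (Nat.eq_dec N 0) as [->|HN0].
  - exists 1%nat; split; [lia|]. intros i Hi. replace i with 1%nat by lia. lra.
  - destruct IH as [k [Hk Hmin]]; [lia|].
    destruct (Rle_dec (f k) (f (S N))) as [Hle|Hle].
    + exists k; split; [lia|]. intros i Hi.
      destruct (Nat.eq_dec i (S N)) as [->|Hne]; [lra|]. apply Hmin; lia.
    + exists (S N); split; [lia|]. intros i Hi.
      destruct (Nat.eq_dec i (S N)) as [->|Hne]; [lra|].
      specialize (Hmin i ltac:(lia)). lra.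
Qed.

Section MinimumPrinciple.

Variables (N : nat) (w r : nat -> R) (c : R).
Hypothesis c_pos : 0 < c.
Hypothesis w_pos : forall i, (1 <= i <= N)%nat -> 0 < w i.
Hypothesis r_pos : forall i, (1 <= i <= N)%nat -> 0 < r i.
Hypothesis w_rec : forall k, (2 <= k <= N - 1)%nat ->
  w k * w k = c + w (k + 1)%nat * w (k - 1)%nat.
Hypothesis r_super : forall k, (2 <= k <= N - 1)%nat ->
  (r k * w k) * (r k * w k) >=
  c + (r (k + 1)%nat * w (k + 1)%nat) * (r (k - 1)%nat * w (k - 1)%nat).
Hypothesis r_first : 1 <= r 1%nat.
Hypothesis r_last : 1 <= r N.

Lemma super_defect k : (2 <= k <= N - 1)%nat ->
  c * (r k * r k - 1) >=
  (r (k + 1)%nat * r (k - 1)%nat - r k * r k) * (w (k + 1)%nat * w (k - 1)%nat).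
Proof.
  intros Hk. pose proof (r_super k Hk) as Hs. pose proof (w_rec k Hk) as Hw.
  replace ((r k * w k) * (r k * w k)) with (r k * r k * (w k * w k)) in Hs by ring.
  rewrite Hw in Hs. nra.
Qed.

Lemma local_min_ge1 k : (2 <= k <= N - 1)%nat ->
  r k <= r (k + 1)%nat -> r k <= r (k - 1)%nat -> 1 <= r k.
Proof.
  intros Hk Hp Hm.
  pose proof (super_defect k Hk) as Hd.
  assert (Hrk : 0 < r k) by (apply r_pos; lia).
  assert (Hwp : 0 < w (k + 1)%nat * w (k - 1)%nat)
    by (apply Rmult_lt_0_compat; apply w_pos; lia).
  assert (Hprod : r k * r k <= r (k + 1)%nat * r (k - 1)%nat)
    by (apply Rmult_le_compat; lra).
  assert (Hsq : 1 <= r k * r k) by nra.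
  nra.
Qed.

Lemma minimum_principle : (1 <= N)%nat -> forall i, (1 <= i <= N)%nat -> 1 <= r i.
Proof.
  intros HN i Hi.
  destruct (exists_argmin r N HN) as [k [Hk Hmin]].
  enough (1 <= r k) by (specialize (Hmin i Hi); lra).
  destruct (Nat.eq_dec k 1) as [->|Hk1]; [exact r_first|].
  destruct (Nat.eq_dec k N) as [->|HkN]; [exact r_last|].
  apply local_min_ge1; [lia| apply Hmin; lia | apply Hmin; lia].
Qed.

Lemma rigidity_step k : (2 <= k <= N - 1)%nat -> r k = 1 ->
  r (k + 1)%nat = 1 /\ r (k - 1)%nat = 1.
Proof.
  intros Hk Hrk.
  pose proof (super_defect k Hk) as Hd. rewrite Hrk in Hd.
  assert (Hwp : 0 < w (k + 1)%nat * w (k - 1)%nat)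
    by (apply Rmult_lt_0_compat; apply w_pos; lia).
  assert (Hprod : r (k + 1)%nat * r (k - 1)%nat <= 1) by nra.
  pose proof (minimum_principle ltac:(lia) (k + 1)%nat ltac:(lia)).
  pose proof (minimum_principle ltac:(lia) (k - 1)%nat ltac:(lia)).
  split; nra.
Qed.

Lemma rigidity k : (2 <= k <= N - 1)%nat -> r k = 1 ->
  forall i, (1 <= i <= N)%nat -> r i = 1.
Proof.
  intros Hk Hrk.
  assert (Up : forall t, (k + t <= N)%nat -> r (k + t)%nat = 1).
  { induction t as [|t IH]; intros Ht; [rewrite Nat.add_0_r; exact Hrk|].
    replace (k + S t)%nat with (k + t + 1)%nat by lia.
    apply (rigidity_step (k + t)); [lia | apply IH; lia]. }
  assert (Down : forall t, (t <= k - 1)%nat -> r (k - t)%nat = 1).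
  { induction t as [|t IH]; intros Ht; [rewrite Nat.sub_0_r; exact Hrk|].
    replace (k - S t)%nat with (k - t - 1)%nat by lia.
    apply (rigidity_step (k - t)); [lia | apply IH; lia]. }
  intros i Hi. destruct (Nat.le_gt_cases k i).
  - replace i with (k + (i - k))%nat by lia. apply Up; lia.
  - replace i with (k - (k - i))%nat by lia. apply Down; lia.
Qed.

End MinimumPrinciple.

Lemma s_pos n k : (1 <= k <= n - 1)%nat -> 0 < s n k.
Proof.
  intros Hk. unfold s.
  assert (0 < INR k) by (apply lt_0_INR; lia).
  assert (INR k < INR n) by (apply lt_INR; lia).
  pose proof PI_RGT_0.
  apply sin_gt_0.
  - apply Rdiv_lt_0_compat; nra.
  - apply (Rmult_lt_reg_r (INR n)); [lra|].
    unfold Rdiv. rewrite Rmult_assoc, Rinv_l by lra. nra.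
Qed.

(* The sine recurrence sin^2 x = sin^2 b + sin(x + b) sin(x - b), at x = k pi/n,
   b = pi/n. *)
Lemma s_recurrence n k : (1 <= k)%nat ->
  s n k * s n k = s n 1 * s n 1 + s n (k + 1) * s n (k - 1).
Proof.
  intros Hk. unfold s.
  rewrite plus_INR, minus_INR by lia. simpl INR.
  set (b := 1 * PI / INR n). set (x := INR k * PI / INR n).
  replace ((INR k + 1) * PI / INR n) with (x + b) by (unfold x, b, Rdiv; ring).
  replace ((INR k - 1) * PI / INR n) with (x - b) by (unfold x, b, Rdiv; ring).
  rewrite sin_plus, sin_minus.
  pose proof (sin2_cos2 x) as Hx. pose proof (sin2_cos2 b) as Hb.
  unfold Rsqr in *. nra.
Qed.

Lemma s_last n : (1 <= n)%nat -> s n (n - 1) = s n 1.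
Proof.
  intros Hn. unfold s. rewrite minus_INR by lia. simpl INR.
  assert (0 < INR n) by (apply lt_0_INR; lia).
  replace ((INR n - 1) * PI / INR n) with (PI - 1 * PI / INR n) by (field; lra).
  apply sin_PI_x.
Qed.

Lemma ln_nonneg x : 1 <= x -> 0 <= ln x.
Proof.
  intros Hx. rewrite <- ln_1. destruct (Req_dec x 1) as [->|Hne]; [lra|].
  left. apply ln_increasing; lra.
Qed.

Lemma ln_pos_iff x : 0 < x -> (0 < ln x <-> 1 < x).
Proof.
  intros Hx. rewrite <- ln_1. split; intros H.
  - exact (ln_lt_inv 1 x Rlt_0_1 Hx H).
  - exact (ln_increasing 1 x Rlt_0_1 H).
Qed.

Lemma consecutive_instance n (D : nat -> R)
  (Hineq : forall j k l : nat, (1 <= j)%nat -> (j < k)%nat -> (k < l)%nat -> (l <= n - 1)%nat ->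
     D k * D (l - j)%nat >= D j * D (l - k)%nat + D l * D (k - j)%nat) :
  forall k, (2 <= k <= n - 2)%nat -> D k * D k >= D 1%nat * D 1%nat + D (k + 1)%nat * D (k - 1)%nat.
Proof.
  intros k Hk.
  pose proof (Hineq 1%nat k (k + 1)%nat ltac:(lia) ltac:(lia) ltac:(lia) ltac:(lia)) as H.
  replace (k + 1 - 1)%nat with k in H by lia.
  replace (k + 1 - k)%nat with 1%nat in H by lia. lra.
Qed.

Theorem mainTheorem12 (n : nat) (D : nat -> R)
  (Hn : (4 <= n)%nat)
  (Hpos : forall k : nat, (1 <= k <= n - 1)%nat -> 0 < D k)
  (Hineq : forall j k l : nat, (1 <= j)%nat -> (j < k)%nat -> (k < l)%nat -> (l <= n - 1)%nat ->
     D k * D (l - j)%nat >= D j * D (l - k)%nat + D l * D (k - j)%nat)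
  (H1 : D 1%nat = s n 1)
  (Hn1 : D (n - 1)%nat = s n 1) :
  (forall k : nat, (2 <= k <= n - 2)%nat -> 0 <= a n D k) /\
  ((exists k : nat, (2 <= k <= n - 2)%nat /\ 0 < a n D k) ->
   forall k : nat, (2 <= k <= n - 2)%nat -> 0 < a n D k).
Proof.
  set (r := fun i => D i / s n i).
  assert (Hs1 : 0 < s n 1) by (apply s_pos; lia).
  assert (HD : forall i, (1 <= i <= n - 1)%nat -> r i * s n i = D i).
  { intros i Hi. pose proof (s_pos n i Hi). unfold r. field. lra. }
  assert (Hr : forall i, (1 <= i <= n - 1)%nat -> 0 < r i).
  { intros i Hi. apply Rdiv_lt_0_compat; [apply Hpos | apply s_pos]; lia. }
  assert (Hsuper : forall k, (2 <= k <= n - 1 - 1)%nat ->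
    (r k * s n k) * (r k * s n k) >=
    s n 1 * s n 1 + (r (k + 1)%nat * s n (k + 1)%nat) * (r (k - 1)%nat * s n (k - 1)%nat)).
  { intros k Hk. rewrite !HD by lia. rewrite <- H1. apply (consecutive_instance n); [exact Hineq | lia]. }
  assert (Hends : 1 <= r 1%nat /\ 1 <= r (n - 1)%nat).
  { unfold r. rewrite H1, Hn1, s_last by lia. split; right; field; lra. }
  assert (Hc : 0 < s n 1 * s n 1) by nra.
  assert (Hrec : forall k, (2 <= k <= n - 1 - 1)%nat ->
    s n k * s n k = s n 1 * s n 1 + s n (k + 1)%nat * s n (k - 1)%nat)
    by (intros k Hk; apply s_recurrence; lia).
  pose proof (minimum_principle (n - 1) (s n) r _ Hc (s_pos n) Hr Hrec Hsuper
    (proj1 Hends) (proj2 Hends) ltac:(lia)) as Hmin.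
  pose proof (rigidity (n - 1) (s n) r _ Hc (s_pos n) Hr Hrec Hsuper
    (proj1 Hends) (proj2 Hends)) as Hrigid.
  split.
  - intros k Hk. apply ln_nonneg, Hmin; lia.
  - intros [m [Hm Ham]] k Hk.
    assert (Hrm : 1 < r m) by (apply ln_pos_iff; [apply Hr; lia | exact Ham]).
    apply ln_pos_iff; [apply Hr; lia|].
    destruct (Rle_lt_or_eq_dec 1 (r k) ltac:(apply Hmin; lia)) as [Hgt|Heq]; [exact Hgt|].
    rewrite (Hrigid k ltac:(lia) (eq_sym Heq) m ltac:(lia)) in Hrm. lra.
Qed.
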